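(* Let $(\mathrm{Block},\mathrm{Gd},\mathrm{Bd})$ be a critical tuple given as input to the Gap algorithm, let $i\in\mathbb{Z}$ with $\mathrm{Block}(i)\neq\emptyset$, and let $P$ be the set of selected elements at any stage of an arbitrary execution of the Gap algorithm. If $e\in B_{\mathcal{U}\setminus F}(\mathrm{Block}(i))\cap\mathrm{span}(B_F(\mathrm{Gd}(i)))$, then $$e\notin\mathrm{span}\big(P\cup B_F(\mathrm{Bd}(i))\big)\iff e\notin\mathrm{span}\Big(\big(P\cap B_{\mathcal{U}\setminus F}(\mathrm{Block}(i))\big)\cup B_F(\mathrm{Bd}(i))\Big).$$
   Context: $M=(\mathcal{U},\mathcal{I})$ is a matroid; $\mathrm{rank}(X)=\max\{|X'|:X'\subseteq X,X'\in\mathcal{I}\}$, $\mathrm{span}(X)=\{e:\mathrm{rank}(X\cup\{e\})=\mathrm{rank}(X)\}$. Standing assumption: elements of rank $0$ have value $0$ and every element of positive value has value $2^i$ for some $i\in\mathbb{Z}$. For $X\subseteq\mathcal{U}$: $B_X(i)=\{e\in X:\mathrm{val}(e)=2^i\}$, $B_X(I)=\bigcup_{i\in I}B_X(i)$. Logarithms base 2. $F\subseteq\mathcal{U}$ is the set of elements revealed in a first (observation) stage; afterwards the elements of $\mathcal{U}\setminus F$ are revealed one by one. Critical tuple: $(\mathrm{Block},\mathrm{Gd},\mathrm{Bd})$ where $\mathrm{Block},\mathrm{Gd},\mathrm{Bd}$ are maps from $\mathbb{Z}$ to subsets of $\mathbb{Z}$ such that for all $i\ge j$ with $\mathrm{Block}(i),\mathrm{Block}(j)$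 nonempty: (1) $i\in\mathrm{Block}(i)$; (2) if $i>j$ then either $\mathrm{Block}(i)=\mathrm{Block}(j)$ or $\min\mathrm{Block}(i)>\max\mathrm{Block}(j)$; (3) if $\mathrm{Block}(i)=\mathrm{Block}(j)$ then $\mathrm{Gd}(i)=\mathrm{Gd}(j)$ and $\mathrm{Bd}(i)=\mathrm{Bd}(j)$; (4) $\mathrm{Block}(i)\cup\mathrm{Bd}(i)\subseteq\mathrm{Gd}(i)$; (5) if $\min\mathrm{Block}(i)>\max\mathrm{Block}(j)$ then $\mathrm{Bd}(i)\subseteq\mathrm{Gd}(i)\subseteq\mathrm{Bd}(j)\subseteq\mathrm{Gd}(j)$; (6) $\max\mathrm{Block}(i)<\min\mathrm{Bd}(i)$. Gap algorithm with input a critical tuple: start with $P=\emptyset$; immediately after each $e\in\mathcal{U}\setminus F$ is revealed (elements of value $0$ are ignored), let $\ell=\log\mathrm{val}(e)$; if $\mathrm{Block}(\ell)\neq\emptyset$, $e\in\mathrm{span}(B_F(\mathrm{Gd}(\ell)))$ and $e\notin\mathrm{span}(P\cup B_F(\mathrm{Bd}(\ell)))$, then add $e$ to $P$. Output $P$. *)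

From mathcomp Require Import all_boot all_order all_algebra.
From mathcomp Require Import boolp.
Set Implicit Arguments. Unset Strict Implicit. Unset Printing Implicit Defensive.
Import Order.TTheory GRing.Theory Num.Theory.

Section Defs.
Variable T : finType.

(* Matroid given by its family of independent sets (ground set U = T). *)
Definition matroid (indep : {set T} -> bool) : Prop :=
  [/\ indep set0,
      (forall A B : {set T}, B \subset A -> indep A -> indep B) &
      (forall A B : {set T}, indep A -> indep B -> #|A| < #|B| ->
         exists2 x, x \in B :\: A & indep (x |: A))].

Definition mrank (indep : {set T} -> bool) (X : {set T}) : nat :=
  \max_(Y : {set T} | (Y \subset X) && indep Y) #|Y|.

Definition mspan (indep : {set T} -> bool) (X : {set T}) : {set T} :=
  [set x | mrank indep (x |: X) == mrank indep X].

(* Values: lvl e = None  <->  val e = 0;  lvl e = Some k  <->  val e = 2^k.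
   This encodes the standing assumption on values. *)
Definition val (R : numFieldType) (lvl : T -> option int) (e : T) : R :=
  if lvl e is Some k then (2%:R : R) ^ k else 0.

(* B_X(I) = { e in X : val e = 2^k for some k in I } *)
Definition Bset (lvl : T -> option int) (X : {set T}) (I : pred int) : {set T} :=
  [set e in X | if lvl e is Some k then I k else false].

End Defs.

(* Critical tuple; subsets of Z are boolean predicates on int.
   "min A > max B" is rendered as: every element of A exceeds every element of B. *)
Definition nonempty (A : pred int) : Prop := exists x, A x.

Definition critical_tuple (Block Gd Bd : int -> pred int) : Prop :=
  forall i j : int, (j <= i)%R -> nonempty (Block i) -> nonempty (Block j) ->
  (Block i i /\ (forall x, Block i x || Bd i x -> Gd i x)) /\
  [/\ ((j < i)%R -> (Block i =1 Block j) \/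
                    (forall a b, Block i a -> Block j b -> (b < a)%R)),
      (Block i =1 Block j -> Gd i =1 Gd j /\ Bd i =1 Bd j),
      ((forall a b, Block i a -> Block j b -> (b < a)%R) ->
         [/\ (forall x, Bd i x -> Gd i x), (forall x, Gd i x -> Bd j x)
           & (forall x, Bd j x -> Gd j x)]) &
      (forall a b, Block i a -> Bd i b -> (a < b)%R)].

Definition gap_step (T : finType) (indep : {set T} -> bool) (lvl : T -> option int)
  (F : {set T}) (Block Gd Bd : int -> pred int) (P : {set T}) (e : T) : {set T} :=
  if lvl e is Some l then
    if [&& `[< nonempty (Block l) >],
           e \in mspan indep (Bset lvl F (Gd l)) &
           e \notin mspan indep (P :|: Bset lvl F (Bd l))]
    then e |: P else P
  else P.

Definition gap (T : finType) (indep : {set T} -> bool) (lvl : T -> option int)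
  (F : {set T}) (Block Gd Bd : int -> pred int) (s : seq T) : {set T} :=
  foldl (gap_step indep lvl F Block Gd Bd) set0 s.

From mathcomp Require Import all_boot all_order all_algebra.
From mathcomp Require Import boolp.
Import Order.TTheory GRing.Theory Num.Theory.

Set Implicit Arguments.
Unset Strict Implicit.
Unset Printing Implicit Defensive.

(* Fix e in span(B_F(Gd i)) and call C := B_{U\F}(Block i) the block of i.
   Along any run of the algorithm we maintain the stronger invariant: for
   every Y with B_F(Bd i) <= Y <= span(B_F(Gd i)),
     e in span(P u Y)  implies  e in span((P n C) u Y).
   When an element x of level l is selected, three cases arise.  If l lies in
   the block of i, then Gd l = Gd i, so x can be absorbed into Y.  If the
   block of l lies above that of i, then Gd l <= Bd i, so x already lies in
   span(B_F(Bd i)) <= span(P u Y) and contributes nothing.  If it lies below,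
   then Gd i <= Bd l; were x needed to span e, the exchange property would put
   x in span(e u P u Y) <= span(P u B_F(Bd l)), contradicting its selection. *)

Section Matroid.
Variables (T : finType) (indep : {set T} -> bool).
Hypothesis indep_matroid : matroid indep.
Local Notation r := (mrank indep).
Local Notation cl := (mspan indep).
Implicit Types (X Y I J : {set T}) (x y : T).

Lemma indep0 : indep set0.
Proof. by case: indep_matroid. Qed.

Lemma indepS I J : I \subset J -> indep J -> indep I.
Proof. by case: indep_matroid => _ indep_sub _; apply: indep_sub. Qed.

Lemma indep_augment I J : indep I -> indep J -> #|I| < #|J| ->
  exists2 x, x \in J :\: I & indep (x |: I).
Proof. by case: indep_matroid => _ _ augment; apply: augment. Qed.

Lemma card_le_mrank X I : I \subset X -> indep I -> #|I| <= r X.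
Proof. by move=> sIX iI; apply: (bigop.leq_bigmax_cond I); rewrite sIX iI. Qed.

Lemma mrank_basis X : exists I, [/\ I \subset X, indep I & #|I| = r X].
Proof.
rewrite /mrank (bigop.bigmax_eq_arg set0) ?sub0set ?indep0 //.
by case: arg_maxnP => [|I /andP[? ?] _]; [rewrite sub0set indep0 | exists I].
Qed.

Lemma mrankS X Y : X \subset Y -> r X <= r Y.
Proof.
move=> sXY; apply/bigop.bigmax_leqP => I /andP[sIX iI].
exact: card_le_mrank (subset_trans sIX sXY) iI.
Qed.

Lemma mrankU1 x X : r (x |: X) <= (r X).+1.
Proof.
have [I [sI iI <-]] := mrank_basis (x |: X).
rewrite (cardsD1 x I) addnC -addn1 leq_add ?leq_b1 //.
apply: card_le_mrank; last exact: indepS (subD1set I x) iI.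
apply/subsetP => y; rewrite !inE => /andP[/negbTE yx /(subsetP sI)].
by rewrite !inE yx.
Qed.

Lemma mrank_augment X I : I \subset X -> indep I -> #|I| < r X ->
  exists2 y, y \in X :\: I & indep (y |: I).
Proof.
move=> sIX iI ltIX; have [J [sJX iJ eJ]] := mrank_basis X.
have ltIJ : #|I| < #|J| by rewrite eJ.
have [y /setDP[yJ yI] iyI] := indep_augment iI iJ ltIJ.
by exists y; rewrite // !inE yI (subsetP sJX).
Qed.

Lemma mrank_extend X I : I \subset X -> indep I ->
  exists J, [/\ I \subset J, J \subset X, indep J & #|J| = r X].
Proof.
move=> sIX iI; move: {2}(r X - #|I|) (erefl (r X - #|I|)) => k.
elim: k I sIX iI => [|k IHk] I sIX iI gap_k.
  exists I; split=> //; apply/eqP; rewrite eqn_leq card_le_mrank //.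
  by rewrite -subn_eq0 gap_k.
have ltIX : #|I| < r X by rewrite -subn_gt0 gap_k.
have [y /setDP[yX yI] iyI] := mrank_augment sIX iI ltIX.
have sIyX : y |: I \subset X by rewrite subUset sub1set yX.
have gap_y : r X - #|y |: I| = k by rewrite cardsU1 yI add1n subnS gap_k.
have [J [sJ sJX iJ eJ]] := IHk _ sIyX iyI gap_y.
by exists J; split=> //; apply: subset_trans sJ; apply: subsetU1.
Qed.

Lemma subset_mspan X : X \subset cl X.
Proof. by apply/subsetP => x xX; rewrite inE (setUidPr _) // sub1set. Qed.

Lemma indepU1_notin_mspan x X I : I \subset X -> indep I -> #|I| = r X ->
  x \notin cl X -> indep (x |: I) /\ x \notin I.
Proof.
move=> sIX iI eI; rewrite inE => rXx.
have ltI : #|I| < r (x |: X).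
  by rewrite eI ltn_neqAle eq_sym rXx mrankS // subsetU1.
have [y /setDP[/setU1P[-> | yX] yI] iyI] :=
  mrank_augment (subset_trans sIX (subsetU1 x X)) iI ltI; first by [].
have sIyX : y |: I \subset X by rewrite subUset sub1set yX.
by have := card_le_mrank sIyX iyI; rewrite cardsU1 yI add1n eI ltnn.
Qed.

Lemma mspanS X Y : X \subset Y -> cl X \subset cl Y.
Proof.
move=> sXY; apply/subsetP => x xX; apply/negPn/negP => xY.
have [I [sIX iI eI]] := mrank_basis X.
have [J [sIJ sJY iJ eJ]] := mrank_extend (subset_trans sIX sXY) iI.
have [ixJ xJ] := indepU1_notin_mspan sJY iJ eJ xY.
have xI : x \notin I by apply: contra xJ; apply: (subsetP sIJ).
have := card_le_mrank (setUS [set x] sIX) (indepS (setUS [set x] sIJ) ixJ).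
by move: xX; rewrite cardsU1 xI add1n eI inE => /eqP->; rewrite ltnn.
Qed.

Lemma mrankU_mspan X Y : Y \subset cl X -> r (X :|: Y) = r X.
Proof.
move=> sY; apply/eqP; rewrite eqn_leq [r X <= _]mrankS ?subsetUl // andbT.
have [I [sIX iI eI]] := mrank_basis X; rewrite leqNgt -eI; apply/negP => ltI.
have [y /setDP[yXY yI] iyI] := mrank_augment (subset_trans sIX (subsetUl X Y)) iI ltI.
have: y \in cl X by case/setUP: yXY => [/(subsetP (subset_mspan X))|/(subsetP sY)].
rewrite inE => /eqP rXy; have := card_le_mrank (setUS [set y] sIX) iyI.
by rewrite cardsU1 yI add1n eI rXy ltnn.
Qed.

Lemma mspan_sub X Y : Y \subset cl X -> cl Y \subset cl X.
Proof.
move=> sY; apply/subsetP => x /(subsetP (mspanS (subsetUr X Y))).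
rewrite !inE (mrankU_mspan sY) => /eqP rXYx.
rewrite eqn_leq [r X <= _]mrankS ?subsetU1 // andbT -rXYx mrankS //.
exact: setUS (subsetUl X Y).
Qed.

Lemma mspan_exchange x y X : x \notin cl X -> x \in cl (y |: X) -> y \in cl (x |: X).
Proof.
rewrite !inE => rXx /eqP rXyx.
have rXx1 : r (x |: X) = (r X).+1.
  by apply/eqP; rewrite eqn_leq mrankU1 ltn_neqAle eq_sym rXx mrankS ?subsetU1.
have rXy1 : r (y |: X) = (r X).+1.
  apply/eqP; rewrite eqn_leq mrankU1 -rXx1 -rXyx mrankS //.
  by rewrite setUCA subsetU1.
by rewrite setUCA rXyx rXx1 rXy1.
Qed.

End Matroid.

Lemma BsetS (T : finType) (lvl : T -> option int) (X : {set T}) (I J : pred int) :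
  subpred I J -> Bset lvl X I \subset Bset lvl X J.
Proof.
by move=> sIJ; apply/subsetP => y; rewrite !inE => /andP[->]; case: (lvl y).
Qed.

Lemma eq_Bset (T : finType) (lvl : T -> option int) (X : {set T}) (I J : pred int) :
  I =1 J -> Bset lvl X I = Bset lvl X J.
Proof. by move=> eIJ; apply/setP => y; rewrite !inE; case: (lvl y) => // k; rewrite eIJ. Qed.

Lemma setIU1l (T : finType) (x : T) (A C : {set T}) :
  (x |: A) :&: C = if x \in C then x |: (A :&: C) else A :&: C.
Proof.
apply/setP => y; case: ifP => xC; rewrite !inE.
by case: eqVneq => [->|]; rewrite ?xC ?andbT.
by case: eqVneq => [->|]; rewrite ?xC ?andbF.
Qed.

Section CriticalTuple.
Variables Block Gd Bd : int -> pred int.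
Hypothesis crit : critical_tuple Block Gd Bd.

Lemma critical_Bd_Gd i : nonempty (Block i) -> subpred (Bd i) (Gd i).
Proof.
by move=> ne_i x Bd_ix; have [[_ -> //]] := crit (lexx i) ne_i ne_i; rewrite Bd_ix orbT.
Qed.

(* Whether the block of l is that of i, above it, or below it. *)
Lemma critical_block_cases i l : nonempty (Block i) -> nonempty (Block l) ->
  [\/ Block i l /\ Gd l =1 Gd i,
      ~~ Block i l /\ subpred (Gd l) (Bd i) |
      ~~ Block i l /\ subpred (Gd i) (Bd l)].
Proof.
move=> ne_i ne_l; have [[Block_ll _] _] := crit (lexx l) ne_l ne_l.
case: (ltgtP l i) => [lt_li|lt_il|<-]; last by constructor 1.
- have [_ [blocks eq_block above _]] := crit (ltW lt_li) ne_i ne_l.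
  case: (blocks lt_li) => [eBil|sep].
    by constructor 1; rewrite eBil; split=> // x; case: (eq_block eBil) => ->.
  have [_ sGi _] := above sep; constructor 3; split=> //.
  by apply/negP => Block_il; have := sep l l Block_il Block_ll; rewrite ltxx.
- have [_ [blocks eq_block above _]] := crit (ltW lt_il) ne_l ne_i.
  case: (blocks lt_il) => [eBli|sep].
    by constructor 1; rewrite -eBli; split=> // x; case: (eq_block eBli) => ->.
  have [_ sGl _] := above sep; constructor 2; split=> //.
  by apply/negP => Block_il; have := sep l l Block_ll Block_il; rewrite ltxx.
Qed.

End CriticalTuple.

Section GapInvariant.
Variables (T : finType) (indep : {set T} -> bool) (lvl : T -> option int).
Variables (F : {set T}) (Block Gd Bd : int -> pred int) (i : int) (e : T).
Hypothesis indep_matroid : matroid indep.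
Hypothesis crit : critical_tuple Block Gd Bd.
Hypothesis ne_i : nonempty (Block i).
Local Notation cl := (mspan indep).
Local Notation G := (Bset lvl F (Gd i)).
Local Notation B := (Bset lvl F (Bd i)).
Local Notation C := (Bset lvl (~: F) (Block i)).
Hypothesis e_G : e \in cl G.

Definition block_part_spans (P : {set T}) : Prop :=
  forall Y : {set T}, B \subset Y -> Y \subset cl G ->
  e \in cl (P :|: Y) -> e \in cl ((P :&: C) :|: Y).

Lemma block_part_spans_step P x : x \notin F -> block_part_spans P ->
  block_part_spans (gap_step indep lvl F Block Gd Bd P x).
Proof.
move=> xF invP; rewrite /gap_step; case lvl_x: (lvl x) => [l|] //.
case: ifP => // /and3P[/asboolP ne_l x_Gl x_Bl] Y BY YG.
have mspanS := mspanS indep_matroid.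
have x_notin_C : ~~ Block i l -> (x \in C) = false.
  by move=> nBlock_il; rewrite !inE lvl_x (negbTE nBlock_il) andbF.
have [[Block_il eGd]|[nBlock_il sGl]|[nBlock_il sGi]] :=
  critical_block_cases crit ne_i ne_l.
- have xC : x \in C by rewrite !inE xF lvl_x.
  have x_G : x \in cl G by rewrite -(eq_Bset lvl F eGd).
  rewrite setIU1l xC -!setUA !(setUCA [set x]); apply: invP.
  + by rewrite subsetU // BY orbT.
  + by rewrite subUset sub1set x_G YG.
- rewrite setIU1l x_notin_C // -setUA => e_xPY; apply: invP => //.
  apply: (subsetP (mspan_sub indep_matroid _)) e_xPY.
  rewrite subUset subset_mspan andbT sub1set; apply: (subsetP (mspanS _ _ _)) x_Gl.
  exact: subset_trans (BsetS lvl F sGl) (subset_trans BY (subsetUr P Y)).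
- rewrite setIU1l x_notin_C // -setUA => e_xPY; apply: invP => //.
  apply/negPn/negP => e_PY; move/negP: x_Bl; apply.
  have G_PBl : cl G \subset cl (P :|: Bset lvl F (Bd l)).
    exact/mspanS/(subset_trans (BsetS lvl F sGi))/subsetUr.
  have x_ePY := mspan_exchange indep_matroid e_PY e_xPY.
  apply: (subsetP (mspan_sub indep_matroid _)) x_ePY.
  rewrite !subUset sub1set (subsetP G_PBl) // (subset_trans YG G_PBl) andbT.
  exact: subset_trans (subsetUl _ _) (subset_mspan _ _).
Qed.

Lemma block_part_spans_gap (s : seq T) : {subset s <= ~: F} ->
  block_part_spans (gap indep lvl F Block Gd Bd s).
Proof.
rewrite /gap; have: block_part_spans set0 by move=> Y _ _; rewrite set0I.
elim: s set0 => [|x s IHs] P invP //= sF.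
apply: IHs => [|y ys]; last by apply: sF; rewrite inE ys orbT.
by apply: block_part_spans_step => //; rewrite -in_setC sF ?mem_head.
Qed.

End GapInvariant.

Theorem lemma2 (T : finType) (indep : {set T} -> bool) (lvl : T -> option int)
  (F : {set T}) (Block Gd Bd : int -> pred int) (order : seq T) (n : nat)
  (i : int) (e : T) :
  matroid indep ->
  (forall x : T, mrank indep [set x] = 0%N -> lvl x = None) ->
  critical_tuple Block Gd Bd ->
  uniq order -> (forall x : T, (x \in order) = (x \notin F)) ->
  nonempty (Block i) ->
  e \in Bset lvl (~: F) (Block i) :&: mspan indep (Bset lvl F (Gd i)) ->
  let P := gap indep lvl F Block Gd Bd (take n order) in
  (e \notin mspan indep (P :|: Bset lvl F (Bd i))) =
  (e \notin mspan indep ((P :&: Bset lvl (~: F) (Block i)) :|: Bset lvl F (Bd i))).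
Proof.
move=> matroid_indep _ crit _ order_F ne_i; rewrite inE => /andP[_ e_G] P.
have take_F : {subset take n order <= ~: F}.
  by move=> x /mem_take; rewrite order_F inE.
have invP := block_part_spans_gap matroid_indep crit ne_i e_G take_F.
congr (~~ _); apply/idP/idP => [|e_CB].
  apply: invP => //; apply: subset_trans (subset_mspan _ _).
  exact: BsetS (critical_Bd_Gd crit ne_i).
by apply: (subsetP (mspanS matroid_indep _)) e_CB; rewrite setSU ?subsetIl.
Qed.
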